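(* Let $\langle A,f,c\rangle$ be an instance with $f$ subadditive and let $B\le 1$ be a budget. If $S\subseteq A$ satisfies $p(S)\le B$, then $|S\setminus L|\le 1$.
   Context: An instance $\langle A,f,c\rangle$ consists of a finite set $A$ of $n$ agents, a monotone nondecreasing set function $f:2^A\to[0,1]$ (the reward function), and costs $c=(c_i)_{i\in A}$ with $c_i\ge 0$. For $S\subseteq A$ and $i\in S$ write $f_S(i)=f(S)-f(S\setminus\{i\})$. The payment of a set $S$ is $p(S)=\sum_{i\in S} c_i/f_S(i)$, with the conventions $c_i/f_S(i)=0$ if $c_i=0=f_S(i)$ and $c_i/f_S(i)=\infty$ if $c_i>0=f_S(i)$. $f$ is subadditive if $f(S\cup S')\le f(S)+f(S')$ for all $S,S'\subseteq A$. The set of light agents is $L=\{i\in A: c_i/f(\{i\})\le 1/2\}$; agents in $A\setminus L$ are heavy. *)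

From HB Require Import structures.
From mathcomp Require Import all_boot all_order all_algebra.
From mathcomp Require Import constructive_ereal.
Set Implicit Arguments. Unset Strict Implicit. Unset Printing Implicit Defensive.
Import Order.TTheory GRing.Theory Num.Theory.
Local Open Scope ring_scope.
Local Open Scope ereal_scope.

Section Defs.
Variables (R : realFieldType) (T : finType).
Implicit Types (f : {set T} -> R).

(* The quotient c/d with the paper's conventions: 0/0 = 0, c/0 = +oo for c > 0. *)
Definition ratio (c d : R) : \bar R :=
  if (d == 0)%R then (if (c == 0)%R then 0 else +oo) else (c / d)%:E.

Definition marg (f : {set T} -> R) (S : {set T}) (i : T) : R :=
  (f S - f (S :\ i))%R.

Definition payment (f : {set T} -> R) (c : T -> R) (S : {set T}) : \bar R :=
  \sum_(i in S) ratio (c i) (marg f S i).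

Definition light (f : {set T} -> R) (c : T -> R) : {set T} :=
  [set i | ratio (c i) (f [set i]) <= (2^-1)%:E].

Definition reward_fun (f : {set T} -> R) : Prop :=
  (forall S : {set T}, 0 <= f S <= 1)%R /\ (forall S S' : {set T}, S \subset S' -> (f S <= f S')%R).

Definition subadditive (f : {set T} -> R) : Prop :=
  forall S S' : {set T}, (f (S :|: S') <= f S + f S')%R.
End Defs.

From Pilot Require Import Defs.
From HB Require Import structures.
From mathcomp Require Import all_boot all_order all_algebra.
From mathcomp Require Import constructive_ereal.
From mathcomp Require Import lra.
Set Implicit Arguments. Unset Strict Implicit. Unset Printing Implicit Defensive.
Import Order.TTheory GRing.Theory Num.Theory.
Local Open Scope ring_scope.

(* Subadditivity bounds each marginal reward f_S(i) by f({i}), so a heavy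
   agent in S is paid c_i / f_S(i) >= c_i / f({i}) > 1/2.  Payments are
   nonnegative, hence two heavy agents in S would already cost more than
   1 >= B. *)

(* [Defs.ratio] is qualified because [all_algebra] also exports [fraction.ratio]. *)
Section Ratio.
Variable R : realFieldType.

Lemma ratio_ge0 (c d : R) : 0 <= c -> 0 <= d -> (0%:E <= Defs.ratio c d)%E.
Proof.
move=> c_ge0 d_ge0; rewrite /Defs.ratio; case: ifP => _.
  by case: ifP => _; rewrite ?leey.
by rewrite lee_fin divr_ge0.
Qed.

Lemma ratio_le_denom (c m d : R) :
  0 <= c -> 0 <= m -> m <= d -> (Defs.ratio c d <= Defs.ratio c m)%E.
Proof.
move=> c_ge0 m_ge0 m_le_d; rewrite /Defs.ratio.
have [->|c_neq0] := eqVneq c 0%R; first by rewrite !mul0r; do 2!case: ifP.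
have [_|m_neq0] := eqVneq m 0%R; first by rewrite leey.
have m_gt0 : 0 < m by rewrite lt0r m_neq0.
have d_gt0 : 0 < d by apply: lt_le_trans m_le_d.
by rewrite (gt_eqF d_gt0) lee_fin ler_wpM2l // lef_pV2.
Qed.

End Ratio.

Section Payment.
Variables (R : realFieldType) (T : finType).
Variables (f : {set T} -> R) (c : T -> R).
Hypothesis f_mono : forall S S' : {set T}, S \subset S' -> f S <= f S'.
Hypothesis c_ge0 : forall i, 0 <= c i.

Lemma marg_ge0 (S : {set T}) (i : T) : 0 <= marg f S i.
Proof. by rewrite /marg subr_ge0 f_mono // subsetDl. Qed.

Lemma marg_le_singleton (S : {set T}) (i : T) :
  subadditive f -> i \in S -> marg f S i <= f [set i].
Proof.
move=> f_sub iS; rewrite /marg lerBlDl.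
by rewrite -{1}(setD1K iS) setUC f_sub.
Qed.

Lemma heavy_ratio_gt_half (S : {set T}) (i : T) :
  subadditive f -> i \in S -> i \notin light f c ->
  ((2^-1)%:E < Defs.ratio (c i) (marg f S i))%E.
Proof.
move=> f_sub iS; rewrite inE -ltNge => /lt_le_trans; apply.
exact/ratio_le_denom/marg_le_singleton/iS/f_sub/marg_ge0.
Qed.

Lemma payment_ge_pair (S : {set T}) (i j : T) :
  i \in S -> j \in S -> i != j ->
  (Defs.ratio (c i) (marg f S i) + Defs.ratio (c j) (marg f S j) <= payment f c S)%E.
Proof.
move=> iS jS ij; rewrite /payment (bigD1 i) //= (bigD1 j) /=; last first.
  by rewrite jS eq_sym.
rewrite addeA leeDl // sume_ge0 // => k _.
exact/ratio_ge0/marg_ge0.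
Qed.

End Payment.

Theorem mainTheorem4 (R : realFieldType) (T : finType)
  (f : {set T} -> R) (c : T -> R) (B : R) (S : {set T}) :
  reward_fun f -> (forall i, 0 <= c i) -> subadditive f ->
  B <= 1 -> (payment f c S <= B%:E)%E ->
  (#|S :\: light f c| <= 1)%N.
Proof.
move=> [_ f_mono] c_ge0 f_sub B_le1 pay_leB.
rewrite leqNgt; apply/negP => /card_gt1P [i [j [hi hj ij]]].
move: hi hj; rewrite !in_setD => /andP [iH iS] /andP [jH jS].
have half_iS := heavy_ratio_gt_half f_mono c_ge0 f_sub iS iH.
have half_jS := heavy_ratio_gt_half f_mono c_ge0 f_sub jS jH.
have pair := payment_ge_pair f_mono c_ge0 iS jS ij.
have halves : ((1 : R)%:E = (2^-1)%:E + (2^-1)%:E)%E.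
  by rewrite -EFinD; congr EFin; lra.
have := lt_le_trans (lteD half_iS half_jS) (le_trans pair pay_leB).
by rewrite -halves lte_fin ltNge B_le1.
Qed.
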